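(* For an integer $k\ge2$, let $\mathcal{X}_k$ be the set of all multisets $S\subset[0,1]^2$ of size exactly $k$ (counting multiplicity), equipped with $$\mathrm{EMD}(S,T)=\min_{\pi:S\to T}\frac1k\sum_{s\in S}\|s-\pi(s)\|_2,$$ the minimum over bijections $\pi$ between the multisets. Then $\mathrm{diam}(\mathcal{X}_k)\le\sqrt2$, and there is an absolute constant $C$ such that $\mathrm{ddim}(\mathcal{X}_k)\le Ck\log k$ for all $k\ge2$.
   Context: The doubling constant $\lambda$ of a metric space is the smallest number such that every ball can be covered by $\lambda$ balls of half the radius; the doubling dimension is $\mathrm{ddim}=\log_2\lambda$. *)

From mathcomp Require Import all_boot all_fingroup.
From Stdlib Require Import Reals.

Set Implicit Arguments.
Unset Strict Implicit.
Unset Printing Implicit Defensive.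

Local Open Scope R_scope.

Definition pt := (R * R)%type.

Definition dist2 (p q : pt) : R :=
  sqrt ((fst p - fst q) * (fst p - fst q) + (snd p - snd q) * (snd p - snd q)).

Definition in_unit_square (p : pt) : Prop :=
  0 <= fst p <= 1 /\ 0 <= snd p <= 1.

(* A multiset of size k, given by an enumeration of its elements
   (with multiplicity); EMD below is invariant under re-enumeration. *)
Definition config (k : nat) := 'I_k -> pt.

Definition in_Xk (k : nat) (S : config k) : Prop :=
  forall i, in_unit_square (S i).

Definition match_cost (k : nat) (S T : config k) (p : {perm 'I_k}) : R :=
  \big[Rplus/0]_(i < k) dist2 (S i) (T (p i)).

(* EMD(S,T) = min over bijections of (1/k) * sum of distances.
   (The identity-permutation cost is used as the neutral element of the
   min; it is itself one of the terms, so this is the true minimum.) *)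
Definition EMD (k : nat) (S T : config k) : R :=
  / INR k * \big[Rmin/match_cost S T 1%g]_(p : {perm 'I_k}) match_cost S T p.

Definition doubling_cover (k m : nat) : Prop :=
  forall (S : config k) (r : R), in_Xk S -> 0 < r ->
    exists c : 'I_m -> config k,
      (forall j, in_Xk (c j)) /\
      forall T : config k, in_Xk T -> EMD S T <= r ->
        exists j, EMD (c j) T <= r / 2.

Definition doubling_constant (k lam : nat) : Prop :=
  doubling_cover k lam /\ forall m, doubling_cover k m -> (lam <= m)%nat.

Definition ddim_of (lam : nat) : R := ln (INR lam) / ln 2.

(* Diameter: matching S_i with T_i, every pair of points of the unit square is
   at distance at most sqrt 2, and the EMD is at most the average cost of any
   matching.

   Doubling: fix a ball of radius r > 0 around S and put h = r/4.  If
   EMD(S,T) <= r, an optimal matching p moves every point by at most k*r =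
   4k*h, so the grid cell of T_(p i) (side h) lies within 4k cells of that of
   S_i in each coordinate.  Hence the grid-snapped configuration
   i |-> snap (T_(p i)) is one of the ((8k+1)^2)^k "grid centres" determined by
   S and an offset pattern, and it is within EMD r/2 of T because snapping
   moves a point by at most 2h.  So (8k+1)^(2k) <= k^(10k) half-radius balls
   suffice, the doubling constant exists (least cover size) and is at most
   k^(10k), whence ddim <= (10 / ln 2) k ln k. *)
From mathcomp Require Import all_boot all_fingroup zify.
From Stdlib Require Import Reals Lra Lia ZArith Classical.
Open Scope R_scope.
Set Implicit Arguments.

Lemma bigRmin_attained (I : Type) (r : seq I) (F : I -> R) i0 :
  exists i, \big[Rmin/F i0]_(j <- r) F j = F i.
Proof.
elim: r => [|a r [i IH]]; first by exists i0; rewrite big_nil.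
rewrite big_cons IH /Rmin; case: Rle_dec; eauto.
Qed.

Lemma bigRmin_le (I : eqType) (r : seq I) (F : I -> R) x0 i :
  i \in r -> \big[Rmin/x0]_(j <- r) F j <= F i.
Proof.
elim: r => // a r IH; rewrite inE big_cons => /orP [/eqP ->| ir].
  exact: Rmin_l.
exact: Rle_trans (Rmin_r _ _) (IH ir).
Qed.

Lemma bigRplus_mono (I : Type) (r : seq I) (F G : I -> R) :
  (forall j, F j <= G j) ->
  \big[Rplus/0]_(j <- r) F j <= \big[Rplus/0]_(j <- r) G j.
Proof.
by move=> FG; elim: r => [|a r IH]; rewrite ?big_nil ?big_cons; [lra|have := FG a; lra].
Qed.

Lemma bigRplus_term (I : eqType) (r : seq I) (F : I -> R) i :
  (forall j, 0 <= F j) -> i \in r -> F i <= \big[Rplus/0]_(j <- r) F j.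
Proof.
move=> F_ge0; have sum_ge0 (s : seq I) : 0 <= \big[Rplus/0]_(j <- s) F j.
  by elim: s => [|a s IH]; rewrite ?big_nil ?big_cons; [lra|have := F_ge0 a; lra].
elim: r => // a r IH; rewrite inE big_cons => /orP [/eqP ->| ir].
  by have := sum_ge0 r; lra.
by have := IH ir; have := F_ge0 a; lra.
Qed.

Lemma bigRplus_ord_le_const k (F : 'I_k -> R) c :
  (forall i, F i <= c) -> \big[Rplus/0]_(i < k) F i <= INR k * c.
Proof.
move=> Fc; apply: Rle_trans (@bigRplus_mono _ _ F (fun=> c) Fc) _.
rewrite big_const_ord; elim: k {F Fc} => [|n IH]; first by rewrite /=; lra.
by rewrite S_INR iterS; lra.
Qed.

Lemma EMD_attained k (S T : config k) :
  exists p, EMD S T = / INR k * match_cost S T p.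
Proof. by rewrite /EMD; have [p ->] := bigRmin_attained (index_enum _) (match_cost S T) 1%g; exists p. Qed.

Lemma EMD_le_cost k (S T : config k) p :
  (0 < k)%nat -> EMD S T <= / INR k * match_cost S T p.
Proof.
move=> k_gt0; apply: Rmult_le_compat_l.
  by apply/Rlt_le/Rinv_0_lt_compat/lt_0_INR/ltP.
by apply: bigRmin_le; rewrite mem_index_enum.
Qed.

Lemma EMD_le_pointwise k (S T : config k) (p : {perm 'I_k}) c :
  (0 < k)%nat -> (forall i, dist2 (S i) (T (p i)) <= c) -> EMD S T <= c.
Proof.
move=> k_gt0 close; have kR : 0 < INR k by apply/lt_0_INR/ltP.
apply: Rle_trans (EMD_le_cost S T p k_gt0) _.
apply: (Rle_trans _ (/ INR k * (INR k * c))).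
  apply: Rmult_le_compat_l; first by apply/Rlt_le/Rinv_0_lt_compat.
  exact: bigRplus_ord_le_const.
by rewrite -Rmult_assoc Rinv_l; lra.
Qed.

Lemma optimal_matching_close k (S T : config k) :
  (0 < k)%nat ->
  exists p : {perm 'I_k}, forall i, dist2 (S i) (T (p i)) <= INR k * EMD S T.
Proof.
move=> k_gt0; have kR : 0 < INR k by apply/lt_0_INR/ltP.
have [p ->] := EMD_attained S T; exists p => i.
rewrite -Rmult_assoc Rinv_r ?Rmult_1_l; last lra.
apply: (@bigRplus_term _ _ (fun j => dist2 (S j) (T (p j)))) (mem_index_enum i).
by move=> j; exact: sqrt_pos.
Qed.

Lemma dist2_sym s t : dist2 s t = dist2 t s.
Proof. by rewrite /dist2; f_equal; ring. Qed.

Lemma coord_le_dist2 (s t : pt) :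
  Rabs (fst s - fst t) <= dist2 s t /\ Rabs (snd s - snd t) <= dist2 s t.
Proof.
rewrite /dist2; split; rewrite -sqrt_Rsqr_abs; apply: sqrt_le_1_alt; rewrite /Rsqr.
  by have := Rle_0_sqr (snd s - snd t); rewrite /Rsqr; lra.
by have := Rle_0_sqr (fst s - fst t); rewrite /Rsqr; lra.
Qed.

Lemma dist2_le_of_coords (s t : pt) a b :
  Rabs (fst s - fst t) <= a -> Rabs (snd s - snd t) <= b ->
  dist2 s t <= sqrt (a * a + b * b).
Proof.
move=> da db; apply: sqrt_le_1_alt.
have sq (x y : R) : Rabs x <= y -> x * x <= y * y.
  by move=> xy; have := Rsqr_abs x; rewrite /Rsqr => ->; have := Rabs_pos x; nra.
by have := sq _ _ da; have := sq _ _ db; lra.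
Qed.

Definition cell (h x : R) : Z := Int_part (x / h).
Definition snap (h x : R) : R := h * IZR (cell h x).

Section Grid.
Variable h : R.
Hypothesis h_gt0 : 0 < h.

Lemma snap_spec x : snap h x <= x < snap h x + h.
Proof.
rewrite /snap /cell; have [lo hi] := base_Int_part (x / h).
have x_eq : x = h * (x / h) by field; lra.
set y := x / h in lo hi x_eq *; set n := IZR (Int_part y) in lo hi *.
by split; nra.
Qed.

Lemma snap_unit x : 0 <= x <= 1 -> 0 <= snap h x <= 1.
Proof.
move=> x01; have [_ snap_lt] := snap_spec x; have [snap_le _] := snap_spec x.
split; last lra.
have [_ hi] := base_Int_part (x / h).
have xh_ge0 : 0 <= x / h by apply: Rmult_le_pos; [lra|apply/Rlt_le/Rinv_0_lt_compat].
have : (0 <= cell h x)%Z.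
  have : (-1 < Int_part (x / h))%Z by apply: lt_IZR; lra.
  by rewrite /cell; lia.
by move=> /IZR_le; rewrite /snap; nra.
Qed.

Lemma cell_close x y n :
  Rabs (x - y) <= INR n * h -> (Z.abs (cell h x - cell h y) <= Z.of_nat n)%Z.
Proof.
move=> xy; rewrite /cell.
have [lo_x hi_x] := base_Int_part (x / h); have [lo_y hi_y] := base_Int_part (y / h).
have quot : Rabs (x / h - y / h) <= INR n.
  have -> : x / h - y / h = (x - y) * / h by field; lra.
  rewrite Rabs_mult (Rabs_pos_eq (/ h)); last by apply/Rlt_le/Rinv_0_lt_compat.
  apply: (Rmult_le_reg_r h) => //; rewrite Rmult_assoc Rinv_l; lra.
have := Rle_abs (x / h - y / h); have := Rle_abs (- (x / h - y / h)).
rewrite Rabs_Ropp INR_IZR_INZ in quot * => abs_ge abs_ge'.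
have diff_lt : (- (Z.of_nat n + 1) < Int_part (x / h) - Int_part (y / h) < Z.of_nat n + 1)%Z.
  by split; apply: lt_IZR; rewrite ?opp_IZR minus_IZR plus_IZR; lra.
lia.
Qed.

End Grid.

Definition snap_pt (h : R) (t : pt) : pt := (snap h (fst t), snap h (snd t)).

Lemma dist2_snap_pt h t : 0 < h -> dist2 (snap_pt h t) t <= 2 * h.
Proof.
move=> h_gt0; have [x_lo x_hi] := snap_spec h_gt0 (fst t).
have [y_lo y_hi] := snap_spec h_gt0 (snd t).
apply: (Rle_trans _ (sqrt (h * h + h * h))).
  by apply: dist2_le_of_coords; rewrite /= Rabs_left1; lra.
rewrite -(sqrt_square (2 * h)); last lra.
by apply: sqrt_le_1_alt; nra.
Qed.

(* Integer offsets in [-4k, 4k] are coded by the 8k+1 elements of 'I_(8k).+1. *)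
Definition offset (k : nat) (d : 'I_(8 * k).+1) : Z := (Z.of_nat d - Z.of_nat (4 * k))%Z.
Definition offset_code (k : nat) (z : Z) : 'I_(8 * k).+1 :=
  inord (Z.to_nat (z + Z.of_nat (4 * k))).

Lemma offset_codeK k z :
  (Z.abs z <= Z.of_nat (4 * k))%Z -> offset k (offset_code k z) = z.
Proof. by move=> z_small; rewrite /offset /offset_code inordK; lia. Qed.

(* Projection of the real line onto [0,1]; it keeps grid centres in X_k. *)
Definition clamp01 (x : R) : R := Rmax 0 (Rmin 1 x).

Lemma clamp01_id x : 0 <= x <= 1 -> clamp01 x = x.
Proof. by move=> x01; rewrite /clamp01 /Rmax /Rmin; repeat case: Rle_dec; lra. Qed.

Definition offset_pattern (k : nat) := {ffun 'I_k -> 'I_(8 * k).+1 * 'I_(8 * k).+1}.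

Definition grid_center k (h : R) (S : config k) (f : offset_pattern k) : config k :=
  fun i => (clamp01 (h * IZR (cell h (fst (S i)) + offset k (f i).1)),
            clamp01 (h * IZR (cell h (snd (S i)) + offset k (f i).2))).

Lemma grid_center_in_Xk k h (S : config k) f : in_Xk (grid_center h S f).
Proof.
by move=> i; rewrite /in_unit_square /= /clamp01 /Rmax /Rmin;
  repeat case: Rle_dec; lra.
Qed.

(* Main covering step: every T in the ball of radius r around S is within
   r/2 of a grid centre of S of mesh r/4.  An optimal matching p moves each
   point by at most k*r = 4k meshes, so the snapped points snap (T_(p i)) are
   grid centres, and snapping costs at most 2 meshes = r/2 per point. *)
Lemma grid_center_near k (S T : config k) r :
  (0 < k)%nat -> 0 < r -> in_Xk T -> EMD S T <= r ->
  exists f, EMD (grid_center (r / 4) S f) T <= r / 2.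
Proof.
move=> k_gt0 r_gt0 T_in ST_le; set h := r / 4; have h_gt0 : 0 < h by rewrite /h; lra.
have [p close] := optimal_matching_close S T k_gt0.
have far (i : 'I_k) : dist2 (T (p i)) (S i) <= INR (4 * k) * h.
  rewrite dist2_sym mult_INR /h; apply: Rle_trans (close i) _.
  have : 0 <= INR k by apply: pos_INR.
  by rewrite /=; nra.
pose dcell (i : 'I_k) (coord : pt -> R) := (cell h (coord (T (p i))) - cell h (coord (S i)))%Z.
have dcell_small (i : 'I_k) :
    (Z.abs (dcell i fst) <= Z.of_nat (4 * k))%Z /\ (Z.abs (dcell i snd) <= Z.of_nat (4 * k))%Z.
  have [c1 c2] := coord_le_dist2 (T (p i)) (S i).
  by split; apply: cell_close => //; apply: Rle_trans (far i).
pose f := [ffun i => (offset_code k (dcell i fst), offset_code k (dcell i snd))].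
exists f; apply: (EMD_le_pointwise _ _ p) => // i.
have [x_unit y_unit] := T_in (p i); have [dx_small dy_small] := dcell_small i.
have -> : grid_center h S f i = snap_pt h (T (p i)).
  rewrite /grid_center ffunE /= !offset_codeK //.
  have shift (a b : Z) : (a + (b - a))%Z = b by lia.
  rewrite /dcell !shift -/(snap h _) -/(snap h _).
  by rewrite !clamp01_id //; apply: snap_unit.
by have := dist2_snap_pt (T (p i)) h_gt0; rewrite /h; lra.
Qed.

Lemma doubling_cover_of_family k (F : finType) :
  (forall (S : config k) r, in_Xk S -> 0 < r ->
     exists c : F -> config k, (forall f, in_Xk (c f)) /\
       forall T, in_Xk T -> EMD S T <= r -> exists f, EMD (c f) T <= r / 2) ->
  doubling_cover k #|F|.
Proof.
move=> family S r S_in r_gt0; have [c [c_in c_near]] := family S r S_in r_gt0.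
exists (fun j => c (enum_val j)); split=> [j|T T_in ST_le]; first exact: c_in.
by have [f near] := c_near T T_in ST_le; exists (enum_rank f); rewrite enum_rankK.
Qed.

Lemma grid_doubling_cover k :
  (0 < k)%nat -> doubling_cover k (expn ((8 * k).+1 * (8 * k).+1) k).
Proof.
move=> k_gt0.
have -> : expn ((8 * k).+1 * (8 * k).+1) k = #|{: offset_pattern k}|.
  by rewrite card_ffun card_prod !card_ord.
apply: doubling_cover_of_family => S r _ r_gt0.
exists (grid_center (r / 4) S); split=> [f|T T_in ST_le]; first exact: grid_center_in_Xk.
exact: grid_center_near.
Qed.

Lemma grid_count_le k : (2 <= k)%nat ->
  (expn ((8 * k).+1 * (8 * k).+1) k <= expn k (10 * k))%nat.
Proof.
move=> k_ge2; rewrite expnM leq_exp2r; last lia.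
have k4 : (16 <= expn k 4)%nat by apply: (@leq_trans (expn 2 4)) => //; rewrite leq_exp2r.
have width : ((8 * k).+1 <= expn k 5)%nat by rewrite expnS; nia.
by rewrite (_ : 10 = 5 + 5)%nat // expnD leq_mul.
Qed.

Lemma doubling_constant_exists k m :
  doubling_cover k m -> exists lam, doubling_constant k lam /\ (lam <= m)%nat.
Proof.
elim/ltn_ind: m => m IH cover_m.
case: (classic (exists n, (n < m)%nat /\ doubling_cover k n)) => [[n [lt_nm cover_n]]|no_smaller].
  by have [lam [const le_lam_n]] := IH n lt_nm cover_n; exists lam; split=> //; lia.
exists m; split=> //; split=> // n cover_n; rewrite leqNgt; apply/negP => lt_nm.
by apply: no_smaller; exists n.
Qed.

Lemma ln_le_of_le x y : 0 < x -> x <= y -> ln x <= ln y.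
Proof. by move=> x_gt0 [xy|<-]; [left; apply: ln_increasing|right]. Qed.

Lemma INR_expn a n : INR (expn a n) = INR a ^ n.
Proof. by elim: n => [|n IH]; rewrite ?expn0 // expnS -multE mult_INR IH. Qed.

Lemma ln_nonpos x : x <= 0 -> ln x = 0.
Proof. by move=> x_le0; unfold ln; destruct (Rlt_dec 0 x); first (exfalso; lra). Qed.

Lemma ln_INR_ge0 n : 0 <= ln (INR n).
Proof.
case: (posnP n) => [->|n_gt0]; first by rewrite ln_nonpos /=; lra.
rewrite -ln_1; apply: ln_le_of_le; first lra.
by apply: (le_INR 1); apply/leP.
Qed.

Lemma ddim_of_le lam n : (lam <= n)%nat -> ddim_of lam <= ln (INR n) / ln 2.
Proof.
move=> le_lam_n; rewrite /ddim_of /Rdiv; have ln2_gt0 : 0 < ln 2 by have := ln_lt_2; lra.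
apply: Rmult_le_compat_r; first by apply/Rlt_le/Rinv_0_lt_compat.
case: (posnP lam) => [->|lam_gt0]; last first.
  by apply: ln_le_of_le; [apply/lt_0_INR/ltP|apply/le_INR/leP].
by rewrite ln_nonpos /=; [apply: ln_INR_ge0|lra].
Qed.

Lemma dist2_unit_square s t :
  in_unit_square s -> in_unit_square t -> dist2 s t <= sqrt 2.
Proof.
move=> [[? ?] [? ?]] [[? ?] [? ?]].
by apply: (Rle_trans _ (sqrt (1 * 1 + 1 * 1))); [apply: dist2_le_of_coords;
  apply: Rabs_le; lra | right; f_equal; ring].
Qed.

Theorem mainTheorem8 :
  (forall (k : nat), (2 <= k)%nat ->
     forall S T : config k, in_Xk S -> in_Xk T -> (EMD S T <= sqrt 2)%R) /\
  (exists C : R, forall (k : nat), (2 <= k)%nat ->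
     exists lam : nat, doubling_constant k lam /\
       (ddim_of lam <= C * INR k * ln (INR k))%R).
Proof.
split=> [k k_ge2 S T S_in T_in|].
  apply: (EMD_le_pointwise _ _ 1%g); first lia.
  by move=> i; apply: dist2_unit_square.
have ln2_gt0 : 0 < ln 2 by have := ln_lt_2; lra.
exists (10 / ln 2) => k k_ge2.
have k_gt0 : (0 < k)%nat by lia.
have [lam [const le_lam]] := doubling_constant_exists (grid_doubling_cover k_gt0).
exists lam; split=> //.
have lam_small := leq_trans le_lam (grid_count_le k k_ge2).
apply: Rle_trans (ddim_of_le _ _ lam_small) _.
rewrite INR_expn ln_pow; last by apply/lt_0_INR/ltP.
by rewrite mult_INR /=; right; field; lra.
Qed.
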